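(* Let $\vec H$ be a DAG with $k$ vertices. Then $\mathrm{dtd}(\vec H)\le\lfloor k/4\rfloor+2$.
   Context: For a DAG $\vec H$, a source is a vertex of in-degree $0$. A DAG elimination forest of a DAG $\vec H$ is defined recursively: if $\vec H$ is empty, it is the empty forest; if the underlying undirected graph of $\vec H$ is disconnected, it is the union of DAG elimination forests (trees) of its connected components; if the underlying graph is connected and $\vec H$ has exactly one source $s$, it is the single-node tree $s$; otherwise (connected, at least two sources) it is a tree whose root is an arbitrarily chosen source $s$ of $\vec H$ and whose subtrees are the trees of a DAG elimination forest of the DAG obtained from $\vec H$ by deleting $s$ and all vertices reachable from $s$. The depth of a rooted forest is the maximum number of nodes on a root-to-leaf path. $\mathrm{dtd}(\vec H)$ is the minimum depth of a DAG elimination forest of $\vec H$. *)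

From mathcomp Require Import all_boot.
Set Implicit Arguments. Unset Strict Implicit. Unset Printing Implicit Defensive.

(* Rooted trees whose nodes are labelled by vertices. A rooted forest is a
   [seq (etree T)]. *)
Inductive etree (T : Type) := ENode of T & seq (etree T).

Definition eroot T (t : etree T) : T := let: ENode s _ := t in s.

(* depth = maximum number of nodes on a root-to-leaf path *)
Fixpoint tree_depth T (t : etree T) : nat :=
  let: ENode _ ch := t in
  (foldr maxn 0 ((fix aux (l : seq (etree T)) : seq nat :=
      match l with [::] => [::] | t' :: l' => tree_depth t' :: aux l' end) ch)).+1.

Definition forest_depth T (F : seq (etree T)) : nat := foldr maxn 0 (map (@tree_depth T) F).

Section DAG.
Variables (T : finType) (e : rel T).

Definition dag : Prop := forall x y, e x y -> ~~ connect e y x.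

Definition adj (V : {set T}) := [rel x y | [&& x \in V, y \in V & e x y]].
Definition uadj (V : {set T}) := [rel x y | adj V x y || adj V y x].
Definition comp (V : {set T}) (x : T) : {set T} := [set y in V | connect (uadj V) x y].
Definition components (V : {set T}) : {set {set T}} := [set comp V x | x in V].
Definition reach (V : {set T}) (s : T) : {set T} := [set y in V | connect (adj V) s y].
Definition sources (V : {set T}) : {set T} := [set s in V | [forall x in V, ~~ e x s]].

(* F consists of exactly one tree per connected component of V; the tree t
   is associated with the component of its root. *)
Definition forest_cover (V : {set T}) (F : seq (etree T)) : bool :=
  uniq [seq comp V (eroot t) | t <- F] &&
  ([set:: [seq comp V (eroot t) | t <- F]] == components V).

Fixpoint is_elim_tree (C : {set T}) (t : etree T) {struct t} : bool :=
  let: ENode s ch := t in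
  [&& s \in sources C &
      if #|sources C| == 1 then nilp ch
      else
        let C' := C :\: reach C s in
        forest_cover C' ch &&
        (fix aux (l : seq (etree T)) : bool :=
           match l with
           | [::] => true
           | t' :: l' => is_elim_tree (comp C' (eroot t')) t' && aux l'
           end) ch].

(* DAG elimination forest of the sub-DAG induced on V: empty if V is empty;
   one elimination tree per connected component otherwise (a single tree
   when V is connected). *)
Definition is_elim_forest (V : {set T}) (F : seq (etree T)) : bool :=
  forest_cover V F && all (fun t => is_elim_tree (comp V (eroot t)) t) F.

Definition dtd_le (V : {set T}) (d : nat) : Prop :=
  exists F, is_elim_forest V F /\ forest_depth F <= d.

End DAG.

From Pilot Require Import Defs.
From mathcomp Require Import all_boot zify.
(* [all_boot] shadows [Defs.comp] with ssrfun's function composition. *)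
Import Defs.
Set Implicit Arguments. Unset Strict Implicit. Unset Printing Implicit Defensive.

(* Call a vertex shared when at least two sources reach it. If some source of a
   connected DAG on k vertices reaches at least four vertices, make it the
   root: every remaining component has at most k - 4 vertices. Otherwise each
   source reaches at most two shared vertices while each shared vertex is
   reached by at least two sources, so there are at most as many shared
   vertices as sources, i.e. at most k/2 of them. Components of what remains
   after deleting a source and everything it reaches are closed under
   predecessors, so they inherit both sources and sharedness from the whole
   graph. Rooting at a source that reaches two shared vertices thus lowers
   their number by two; if no such source exists, the graph has at most one
   shared vertex, and a single source when it has none. Hence m shared
   vertices give depth at most ceil(m/2) + 1 <= floor(k/4) + 2. *)

Lemma tree_depth_ENode (T : Type) (s : T) (ch : seq (etree T)) :
  tree_depth (ENode s ch) = (forest_depth ch).+1.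
Proof. by rewrite /= /forest_depth; congr (_.+1); elim: ch => //= t ch ->. Qed.

Section DagElimination.
Variables (T : finType) (e : rel T).
Implicit Types (V W C : {set T}) (s v x y : T).

Lemma is_elim_tree_ENode C s ch :
  is_elim_tree e C (ENode s ch) =
  (s \in sources e C) &&
  (if #|sources e C| == 1 then nilp ch else
     forest_cover e (C :\: reach e C s) ch &&
     all (fun t => is_elim_tree e (comp e (C :\: reach e C s) (eroot t)) t) ch).
Proof. by rewrite /=; congr (_ && _); case: ifP. Qed.

Definition has_elim_tree C d :=
  exists t, [/\ is_elim_tree e C t, eroot t \in C & tree_depth t <= d].

Lemma has_elim_tree_mono C d d' :
  d <= d' -> has_elim_tree C d -> has_elim_tree C d'.
Proof. by move=> le_dd' [t [? ? /leq_trans]]; exists t; split; auto. Qed.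

Lemma connect_uadj_sym V : connect_sym (uadj e V).
Proof. by apply: sym_connect_sym => x y; rewrite /= orbC. Qed.

Lemma comp_sub V x : comp e V x \subset V.
Proof. by apply/subsetP => y; rewrite inE => /andP[]. Qed.

Lemma comp_refl V x : x \in V -> x \in comp e V x.
Proof. by move=> xV; rewrite inE xV connect0. Qed.

Lemma comp_eq V x y : y \in comp e V x -> comp e V y = comp e V x.
Proof.
rewrite inE => /andP[_ cxy]; apply/setP => z; rewrite !inE.
by rewrite (same_connect (connect_uadj_sym V) cxy).
Qed.

Lemma uadj_mem V x y : uadj e V x y -> (x \in V) && (y \in V).
Proof. by case/orP=> /and3P[-> -> _]. Qed.

Lemma elim_forest_of_trees V d :
  (forall x, x \in V -> has_elim_tree (comp e V x) d) -> dtd_le e V d.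
Proof.
move=> trees.
suff [F [mapF allF dF]] : exists F, [/\ [seq comp e V (eroot t) | t <- F] =
     enum (components e V),
     all (fun t => is_elim_tree e (comp e V (eroot t)) t) F & forest_depth F <= d].
  by exists F; rewrite /is_elim_forest /forest_cover allF mapF enum_uniq set_enum eqxx.
have : {subset enum (components e V) <= components e V} by move=> X; rewrite mem_enum.
elim: (enum _) => [|X cs IH] sub; first by exists [::].
have [F [mapF allF dF]] := IH (fun Y Ycs => sub Y (mem_behead (s := X :: cs) Ycs)).
have /imsetP[x xV ->] := sub X (mem_head _ _).
have [t [tree_t /comp_eq rt dt]] := trees x xV.
by exists (t :: F); rewrite /= rt mapF tree_t allF /forest_depth /= geq_max dt.
Qed.

Lemma has_elim_tree_single_source C s :
  s \in sources e C -> #|sources e C| = 1 -> has_elim_tree C 1.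
Proof.
move=> sS one_src; exists (ENode s [::]).
by rewrite is_elim_tree_ENode sS one_src tree_depth_ENode; case/setIdP: sS.
Qed.

Lemma has_elim_tree_root C s d :
  s \in sources e C -> dtd_le e (C :\: reach e C s) d -> has_elim_tree C d.+1.
Proof.
move=> sS [F [/andP[coverF treesF] dF]].
have [one_src|] := eqVneq #|sources e C| 1.
  exact: has_elim_tree_mono (has_elim_tree_single_source sS one_src).
move=> /negbTE many_src; exists (ENode s F).
by rewrite is_elim_tree_ENode sS many_src coverF treesF tree_depth_ENode ltnS;
  case/setIdP: sS.
Qed.

Definition connected C := forall x y, x \in C -> y \in C -> connect (uadj e C) x y.

Lemma comp_connected V x : x \in V -> connected (comp e V x).
Proof.
move=> xV; set C := comp e V x.
have path_in_comp p a : a \in C -> path (uadj e V) a p ->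
    connect (uadj e C) a (last a p).
  elim: p a => [|z p IH] a aC /=; first by rewrite connect0.
  case/andP=> uaz pz.
  have zC : z \in C.
    case/setIdP: aC => _ cxa; case/andP: (uadj_mem uaz) => _ zV.
    by rewrite inE zV (connect_trans cxa) ?connect1.
  apply: connect_trans (IH z zC pz); apply: connect1.
  by case/orP: uaz => /and3P[_ _ exy]; rewrite /= aC zC exy ?orbT.
have from_x y : y \in C -> connect (uadj e C) x y.
  case/setIdP=> _ /connectP[p pp ->]; exact: path_in_comp (comp_refl xV) pp.
by move=> y z yC zC; rewrite (connect_trans _ (from_x z zC)) // connect_uadj_sym from_x.
Qed.

Lemma connected_const (X : Type) (f : T -> X) C :
  connected C -> (forall x y, x \in C -> y \in C -> e x y -> f x = f y) ->
  {in C &, forall x y, f x = f y}.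
Proof.
move=> cC f_edge x y xC yC; have /connectP[p pp ->] := cC x y xC yC.
elim: p x xC pp {yC} => [|z p IH] x xC //= /andP[uxz pz].
have /andP[_ zC] := uadj_mem uxz; rewrite -(IH z zC pz).
by case/orP: uxz => /and3P[_ _ ?]; [exact: f_edge | symmetry; exact: f_edge].
Qed.

Definition pred_closed W V :=
  W \subset V /\ forall x y, x \in V -> y \in W -> e x y -> x \in W.

Lemma connect_adj_subset W V x y :
  W \subset V -> connect (adj e W) x y -> connect (adj e V) x y.
Proof.
move=> /subsetP sWV; apply: connect_sub => a b /and3P[aW bW eab].
by rewrite connect1 //= !sWV.
Qed.

Lemma pred_closed_connect W V x y :
  pred_closed W V -> connect (adj e V) x y -> y \in W ->
  x \in W /\ connect (adj e W) x y.
Proof.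
move=> [_ clW] /connectP[p]; elim: p x => [|z p IH] x /=.
  by move=> _ -> yW; rewrite connect0.
case/andP=> /and3P[xV _ exz] pz ey yW.
have [zW czy] := IH z pz ey yW; have xW := clW _ _ xV zW exz.
by split=> //; apply: connect_trans czy; rewrite connect1 //= xW zW.
Qed.

Lemma pred_closed_trans W V C :
  pred_closed W V -> pred_closed V C -> pred_closed W C.
Proof.
move=> [sWV clW] [sVC clV]; split; first exact: subset_trans sVC.
by move=> x y xC yW exy; apply: clW (clV _ _ xC (subsetP sWV y yW) exy) yW exy.
Qed.

Lemma pred_closed_comp V x : pred_closed (comp e V x) V.
Proof.
split=> [|u y uV /setIdP[yV cxy] euy]; first exact: comp_sub.
by rewrite inE uV (connect_trans cxy) // connect1 //= uV yV euy orbT.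
Qed.

Lemma pred_closed_reach_compl C s : pred_closed (C :\: reach e C s) C.
Proof.
split=> [|x y xC /setDP[yC nyR] exy]; first exact: subsetDl.
rewrite inE xC andbT; apply: contra nyR => /setIdP[_ csx].
by rewrite inE yC (connect_trans csx) // connect1 //= xC yC.
Qed.

Lemma pred_closed_child C s x :
  pred_closed (comp e (C :\: reach e C s) x) C.
Proof. exact: pred_closed_trans (pred_closed_comp _ _) (pred_closed_reach_compl _ _). Qed.

Lemma sources_pred_closed W V :
  pred_closed W V -> sources e W = sources e V :&: W.
Proof.
move=> [sWV clW]; apply/setP => s; rewrite !inE.
apply/andP/andP=> [[sW /forallP srcW]|[/andP[sV /forallP srcV] sW]].
  rewrite (subsetP sWV) //; split=> //; apply/forallP => x; apply/implyP => xV.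
  by apply/negP => exs; have := srcW x; rewrite (clW _ _ xV sW exs) exs.
split=> //; apply/forallP => x; apply/implyP => xW.
by have := srcV x; rewrite (subsetP sWV).
Qed.

Definition anc C v := [set s in sources e C | connect (adj e C) s v].
Definition shared C := [set v in C | 1 < #|anc C v|].

Lemma shared_sub C : shared C \subset C.
Proof. by apply/subsetP => v /setIdP[]. Qed.

Lemma mem_anc C v s :
  v \in C -> (s \in anc C v) = (s \in sources e C) && (v \in reach e C s).
Proof. by move=> vC; rewrite !inE vC. Qed.

Lemma anc_pred_closed W V v :
  pred_closed W V -> v \in W -> anc W v = anc V v.
Proof.
move=> clWV vW; apply/setP => s; rewrite /anc (sources_pred_closed clWV) !inE.
apply/andP/andP=> [[/andP[-> _] /(connect_adj_subset (proj1 clWV))]|] //.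
by case=> sV /(pred_closed_connect clWV)[] // sW ->; rewrite sV sW.
Qed.

Lemma shared_pred_closed W V : pred_closed W V -> shared W = shared V :&: W.
Proof.
move=> clWV; apply/setP => v; rewrite !inE.
have [vW|] := boolP (v \in W); last by rewrite andbF.
by rewrite (anc_pred_closed clWV vW) (subsetP (proj1 clWV) v vW) andbT.
Qed.

Lemma source_connect_eq C s t :
  s \in sources e C -> connect (adj e C) t s -> t = s.
Proof.
case/setIdP=> sC /forallP srcs /connectP[p].
case/lastP: p => [|q z] /=; first by move=> _ ->.
rewrite rcons_path last_rcons => /andP[_ /and3P[aC _ h]] ez; subst z.
by have := srcs (last t q); rewrite aC h.
Qed.

Lemma anc_source C s : s \in sources e C -> anc C s = [set s].
Proof.
move=> sS; apply/setP => t; rewrite !inE.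
apply/andP/eqP=> [[_ /(source_connect_eq sS)] //|->].
by case/setIdP: sS => sC srcs; rewrite sC srcs connect0.
Qed.

Lemma source_notin_shared C s : s \in sources e C -> s \notin shared C.
Proof. by move=> sS; rewrite inE anc_source // cards1 andbF. Qed.

Lemma anc_edge C x y : x \in C -> y \in C -> e x y -> anc C x \subset anc C y.
Proof.
move=> xC yC exy; apply/subsetP => s /setIdP[sS csx].
by rewrite inE sS (connect_trans csx) // connect1 //= xC yC.
Qed.

Lemma card_shared_sources C : #|shared C| + #|sources e C| <= #|C|.
Proof.
rewrite -cardsUI (_ : _ :&: _ = set0) ?cards0 ?addn0.
  by apply/subset_leq_card/subsetP => z /setUP[] /setIdP[].
apply/setP => z; rewrite inE [z \in set0]inE.
by apply/andP => -[zM /source_notin_shared]; rewrite zM.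
Qed.

(* Each shared vertex is counted at least twice, and a source reaching at most
   three vertices (itself included) reaches at most two shared ones. *)
Lemma card_shared_le_sources C :
  (forall s, s \in sources e C -> #|reach e C s| <= 3) ->
  #|shared C| <= #|sources e C|.
Proof.
move=> small_reach.
have incidences : \sum_(w in shared C) #|anc C w| =
    \sum_(s in sources e C) #|[set w in shared C | connect (adj e C) s w]|.
  rewrite (eq_bigr (fun w => \sum_(s in sources e C) connect (adj e C) s w)).
    rewrite exchange_big; apply: eq_bigr => s _.
    by rewrite -sum1dep_card big_mkcondr; apply: eq_bigr => w _; case: connect.
  by move=> w _; rewrite -sum1dep_card big_mkcondr; apply: eq_bigr => s _; case: connect.
have per_shared : 2 * #|shared C| <= \sum_(w in shared C) #|anc C w|.
  by rewrite mulnC -sum_nat_const; apply: leq_sum => w /setIdP[].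
have per_source s : s \in sources e C ->
    #|[set w in shared C | connect (adj e C) s w]| <= 2.
  move=> sS; have /setIdP[sC _] := sS.
  have : [set w in shared C | connect (adj e C) s w] \subset reach e C s :\ s.
    apply/subsetP => w /setIdP[wM csw]; have /setIdP[wC _] := wM.
    rewrite in_setD1 inE wC csw !andbT.
    by apply: contraNneq _ (source_notin_shared sS) => <-.
  move/subset_leq_card/leq_trans; apply.
  have := small_reach s sS; have := cardsD1 s (reach e C s).
  by rewrite inE sC connect0 /=; lia.
have : \sum_(s in sources e C) #|[set w in shared C | connect (adj e C) s w]|
    <= \sum_(s in sources e C) 2 by exact: leq_sum.
by rewrite sum_nat_const -incidences; lia.
Qed.

Lemma card_child C s x :
  #|comp e (C :\: reach e C s) x| <= #|C| - #|reach e C s|.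
Proof.
have sRC : reach e C s \subset C by apply/subsetP => z /setIdP[].
by rewrite -{2}(setIidPr sRC) -cardsD subset_leq_card ?comp_sub.
Qed.

Lemma card_shared_child C s x :
  #|shared (comp e (C :\: reach e C s) x)| <=
  #|shared C| - #|shared C :&: reach e C s|.
Proof.
rewrite (shared_pred_closed (pred_closed_child _ _ _)) -cardsD subset_leq_card //.
apply/subsetP => z /setIP[zM /(subsetP (comp_sub _ _)) /setDP[_ zR]].
by rewrite inE zM zR.
Qed.

Hypothesis dag_e : dag e.

Lemma source_exists C u :
  u \in C -> exists2 s, s \in sources e C & connect (adj e C) s u.
Proof.
move=> uC; have [n] := ubnP #|[set z in C | connect (adj e C) z u]|.
elim: n u uC => // n IH u uC.
have [uS|] := boolP (u \in sources e C); first by exists u; rewrite ?connect0.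
rewrite inE uC /= negb_forall => /existsP[x]; rewrite negb_imply negbK.
case/andP=> xC exu before_u.
have cxu : connect (adj e C) x u by rewrite connect1 //= xC uC.
suff [s sS csx] : exists2 s, s \in sources e C & connect (adj e C) s x.
  by exists s; rewrite // (connect_trans csx).
apply: IH xC (leq_trans (proper_card _) before_u).
rewrite properE; apply/andP; split.
  by apply/subsetP => z /setIdP[zC czx]; rewrite inE zC (connect_trans czx).
apply/subsetPn; exists u; first by rewrite inE uC connect0.
rewrite inE uC; apply: contraNN (dag_e exu).
by apply: connect_sub => a b /and3P[_ _ eab]; rewrite connect1.
Qed.

Lemma anc_neq0 C v : v \in C -> anc C v != set0.
Proof.
by move=> vC; have [s sS csv] := source_exists vC; apply/set0Pn; exists s; rewrite inE sS.
Qed.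

Lemma anc_edge_eq C x y :
  x \in C -> y \in C -> e x y -> y \notin shared C -> anc C x = anc C y.
Proof.
move=> xC yC exy; rewrite inE yC /= -leqNgt => /leq_trans le1.
apply/eqP; rewrite eqEcard anc_edge //= le1 // card_gt0; exact: anc_neq0.
Qed.

Lemma connected_single_source C :
  connected C -> shared C = set0 -> #|sources e C| <= 1.
Proof.
move=> cC M0; apply/card_le1_eqP => s t.
move=> /[dup] sS /setIdP[sC _] /[dup] tS /setIdP[tC _].
suff /setP/(_ t) : anc C s = anc C t by rewrite !anc_source // !inE eqxx => /eqP.
apply: connected_const sC tC => // x y xC yC exy.
by apply: anc_edge_eq; rewrite // M0 inE.
Qed.

(* The shared vertices reached from the source ancestors of a vertex do not
   change along edges, and reduce to [w] at a shared vertex [w]. *)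
Lemma connected_shared_le1 C :
  connected C -> (forall s, s \in sources e C -> #|shared C :&: reach e C s| <= 1) ->
  #|shared C| <= 1.
Proof.
move=> cC few; have sharedC := subsetP (shared_sub C).
have same_shared s w z : s \in sources e C -> w \in shared C -> z \in shared C ->
    w \in reach e C s -> z \in reach e C s -> z = w.
  by move=> sS wM zM wR zR; apply: (card_le1_eqP (few s sS)); rewrite inE ?zM ?wM.
pose below v := [set w in shared C | [exists s in anc C v, w \in reach e C s]].
have below_shared_eq y x : y \in shared C -> x \in C -> anc C x \subset anc C y ->
    below x = [set y].
  move=> yM xC /subsetP sub; have yC := sharedC y yM.
  apply/setP => z; rewrite /below in_set in_set1.
  apply/andP/eqP=> [[zM /existsP[s /andP[sx zR]]]|->].
    have /setIdP[sS _] := sx; move: (sub s sx); rewrite mem_anc // => /andP[_ yR].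
    exact: same_shared sS yM zM yR zR.
  have /set0Pn[s sx] := anc_neq0 xC; move: (sub s sx); rewrite mem_anc // => /andP[_ yR].
  by split=> //; apply/existsP; exists s; rewrite sx.
have below_edge x y : x \in C -> y \in C -> e x y -> below x = below y.
  move=> xC yC exy; have [yM|yNM] := boolP (y \in shared C).
    rewrite (below_shared_eq y x yM xC (anc_edge xC yC exy)).
    by rewrite (below_shared_eq y y yM yC (subxx _)).
  by rewrite /below (anc_edge_eq xC yC exy yNM).
apply/card_le1_eqP => w1 w2 w1M w2M.
have := connected_const cC below_edge (sharedC w1 w1M) (sharedC w2 w2M).
rewrite (below_shared_eq w1 w1 w1M (sharedC _ w1M) (subxx _)).
rewrite (below_shared_eq w2 w2 w2M (sharedC _ w2M) (subxx _)).
by move=> /setP/(_ w2); rewrite !inE eqxx => /eqP.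
Qed.

Lemma has_elim_tree_shared C x :
  connected C -> x \in C -> has_elim_tree C ((#|shared C| + 1) %/ 2 + 1).
Proof.
have [n] := ubnP #|shared C|; elim: n C x => // n IH C x lt_mn cC xC.
have [s0 s0S _] := source_exists xC.
have [one_src|many_src] := eqVneq #|sources e C| 1.
  by apply: has_elim_tree_mono (has_elim_tree_single_source s0S one_src); lia.
have shared_gt0 : 0 < #|shared C|.
  rewrite lt0n cards_eq0; apply: contra_neq many_src => /(connected_single_source cC).
  have : 0 < #|sources e C| by rewrite card_gt0; apply/set0Pn; exists s0.
  lia.
have [s sS drop] : exists2 s, s \in sources e C &
    minn 2 #|shared C| <= #|shared C :&: reach e C s|.
  have [/existsP[s /andP[sS two]]|] := boolP [exists s in sources e C,
      1 < #|shared C :&: reach e C s|]; first by exists s; rewrite // geq_min two.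
  rewrite negb_exists => /forallP few.
  have le1 : #|shared C| <= 1.
    by apply: connected_shared_le1 cC _ => s sS; have := few s; rewrite sS; lia.
  have /set0Pn[w wM] : shared C != set0 by rewrite -card_gt0.
  have wC := subsetP (shared_sub C) w wM.
  have /set0Pn[s] := anc_neq0 wC; rewrite mem_anc // => /andP[sS wR].
  exists s; rewrite // (leq_trans (geq_minr _ _)) // (leq_trans le1) // card_gt0.
  by apply/set0Pn; exists w; rewrite inE wM.
have le_drop : #|shared C :&: reach e C s| <= #|shared C|.
  by rewrite subset_leq_card ?subsetIl.
rewrite addn1; apply: (has_elim_tree_root sS); apply: elim_forest_of_trees => y yC'.
have := card_shared_child C s y; set D := comp _ _ y => le_child.
apply: has_elim_tree_mono (IH D y _ (comp_connected yC') (comp_refl yC')); lia.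
Qed.

Lemma has_elim_tree_card C x :
  connected C -> x \in C -> has_elim_tree C (#|C| %/ 4 + 2).
Proof.
have [n] := ubnP #|C|; elim: n C x => // n IH C x lt_Cn cC xC.
have [/existsP[s /andP[sS big]]|] := boolP [exists s in sources e C, 3 < #|reach e C s|].
  have le_reach : #|reach e C s| <= #|C| by apply/subset_leq_card/subsetP => z /setIdP[].
  rewrite -addn1 addn2; apply: (has_elim_tree_root sS).
  apply: elim_forest_of_trees => y yC'.
  have := card_child C s y; set D := comp _ _ y => le_child.
  apply: has_elim_tree_mono (IH D y _ (comp_connected yC') (comp_refl yC')); lia.
rewrite negb_exists => /forallP small.
have few_shared : #|shared C| <= #|sources e C|.
  by apply: card_shared_le_sources => s sS; have := small s; rewrite sS; lia.
have := card_shared_sources C => bound.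
apply: has_elim_tree_mono (has_elim_tree_shared cC xC); lia.
Qed.

End DagElimination.

Theorem mainTheorem9 (T : finType) (e : rel T) (k : nat) :
  dag e -> #|T| = k -> dtd_le e [set: T] (k %/ 4 + 2).
Proof.
move=> dag_e <-; apply: elim_forest_of_trees => x xT.
have comp_x := has_elim_tree_card dag_e (comp_connected (e := e) xT) (comp_refl e xT).
apply: has_elim_tree_mono comp_x.
by rewrite leq_add2r leq_div2r // -cardsT subset_leq_card ?subsetT.
Qed.
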